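(* For $n=4$: $\mathbb{O}_{4,0}\simeq\mathbb{O}_{2,2}$ and $\mathbb{O}_{3,1}\simeq\mathbb{O}_{1,3}$ (as graded algebras).
   Context: $\mathbb{Z}_2=\{0,1\}$. For $p+q=n\ge3$, $\mathbb{O}_{p,q}$ is the real algebra with basis $\{u_x: x\in\mathbb{Z}_2^n\}$ and product $u_x\cdot u_y=(-1)^{f(x,y)}u_{x+y}$, where $f(x,y)=\sum_{1\le i<j<k\le n}(x_ix_jy_k+x_iy_jx_k+y_ix_jx_k)+\sum_{1\le i\le j\le n}x_iy_j+\sum_{1\le i\le p}x_iy_i$. A graded isomorphism is an algebra isomorphism sending each homogeneous element (scalar multiple of some $u_x$) to a homogeneous element. *)

From HB Require Import structures.
From mathcomp Require Import all_boot all_order all_algebra.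
From mathcomp Require Import reals.
Set Implicit Arguments. Unset Strict Implicit. Unset Printing Implicit Defensive.
Import Order.TTheory GRing.Theory Num.Theory.
Local Open Scope ring_scope.

Notation Z2n n := {ffun 'I_n -> bool}.
Definition z2add n (x y : Z2n n) : Z2n n := [ffun i => x i (+) y i].

(* The twisting function f(x,y) for O_{p,q}, n = p + q, computed as a natural
   number (its parity is what matters). Indices 1..n are 'I_n (0-based). *)
Definition ftwist (p q : nat) (x y : Z2n (p + q)) : nat :=
  let b (z : Z2n (p + q)) i := nat_of_bool (z i) in
  (\sum_(i < p + q) \sum_(j < p + q) \sum_(k < p + q | (i < j < k)%N)
     (b x i * b x j * b y k + b x i * b y j * b x k + b y i * b x j * b x k)
   + \sum_(i < p + q) \sum_(j < p + q | (i <= j)%N) b x i * b y j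
   + \sum_(i < p + q | (i < p)%N) b x i * b y i)%N.

Notation Oelt R p q := {ffun Z2n (p + q) -> R}.
Section Oalg.
Variable R : realType.

(* Elements of O_{p,q}: coordinate functions on the basis {u_x : x in Z_2^n}. *)
Local Notation Oelt p q := {ffun Z2n (p + q) -> R}.

Definition ubasis p q (x : Z2n (p + q)) : Oelt p q := [ffun z => (z == x)%:R].

(* product: u_x . u_y = (-1)^{f(x,y)} u_{x+y}, extended bilinearly *)
Definition Oscale p q (c : R) (a : Oelt p q) : Oelt p q := [ffun z => c * a z].

Definition Omul p q (a b : Oelt p q) : Oelt p q :=
  [ffun z => \sum_(x : Z2n (p + q)) \sum_(y : Z2n (p + q) | z2add x y == z)
     (-1) ^+ ftwist x y * a x * b y].

Definition homogeneous p q (a : Oelt p q) : Prop :=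
  exists (c : R) (x : Z2n (p + q)), a = Oscale c (ubasis x).

Definition graded_iso p q p' q' (phi : Oelt p q -> Oelt p' q') : Prop :=
  [/\ bijective phi,
      (forall a b, phi (a + b) = phi a + phi b),
      (forall (c : R) a, phi (Oscale c a) = Oscale c (phi a)),
      (forall a b, phi (Omul a b) = Omul (phi a) (phi b))
    & (forall a, homogeneous a -> homogeneous (phi a))].

Definition graded_isomorphic p q p' q' : Prop :=
  exists phi : Oelt p q -> Oelt p' q', graded_iso phi.
End Oalg.

From mathcomp Require Import all_boot all_order all_algebra reals.
From mathcomp Require Import ring.
Set Implicit Arguments. Unset Strict Implicit. Unset Printing Implicit Defensive.
Import Order.TTheory GRing.Theory Num.Theory.
Local Open Scope ring_scope.

(* An additive bijection A of Z_2^n together with signs s induces the linear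
   map u_x |-> (-1)^(s x) u_(A x), which preserves homogeneous elements.  It is
   multiplicative as soon as the twisting functions f of O_{p,q} and f' of
   O_{p',q'} differ by the coboundary of s:
     f(x,y) + f'(Ax,Ay) = s x + s y + s(x+y)   (mod 2).
   For n = 4 it then suffices to exhibit A and s and to check this identity on
   all of Z_2^4 x Z_2^4. *)

Section SignedRelabelling.

Variables (R : realType) (p q p' q' : nat).
Variables (A : Z2n (p + q) -> Z2n (p' + q')) (B : Z2n (p' + q') -> Z2n (p + q)).
Variable s : Z2n (p + q) -> bool.
Hypotheses (AK : cancel A B) (BK : cancel B A).
Hypothesis A_add : {morph A : x y / z2add x y}.
Hypothesis ftwist_coboundary : forall x y,
  s (z2add x y) (+) odd (ftwist x y) = s x (+) s y (+) odd (ftwist (A x) (A y)).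

Definition relabel (a : Oelt R p q) : Oelt R p' q' :=
  [ffun z => (-1) ^+ s (B z) * a (B z)].

Definition unrelabel (b : Oelt R p' q') : Oelt R p q :=
  [ffun x => (-1) ^+ s x * b (A x)].

Lemma relabelK : cancel relabel unrelabel.
Proof.
by move=> a; apply/ffunP => x; rewrite !ffunE AK mulrA -signr_addb addbb mul1r.
Qed.

Lemma unrelabelK : cancel unrelabel relabel.
Proof.
by move=> b; apply/ffunP => z; rewrite !ffunE BK mulrA -signr_addb addbb mul1r.
Qed.

Lemma sign_ftwist_coboundary x y :
  (-1) ^+ s (z2add x y) * (-1) ^+ ftwist x y
  = (-1) ^+ s x * (-1) ^+ s y * (-1) ^+ ftwist (A x) (A y) :> R.
Proof.
rewrite -(signr_odd _ (ftwist x y)) -(signr_odd _ (ftwist (A x) (A y))).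
by rewrite -signr_addb ftwist_coboundary !signr_addb.
Qed.

Lemma relabel_mul a b : relabel (Omul a b) = Omul (relabel a) (relabel b).
Proof.
have A_bij : bijective A by exists B.
apply/ffunP => z; rewrite !ffunE mulr_sumr (reindex A (onW_bij _ A_bij)).
apply: eq_bigr => x _; rewrite mulr_sumr (reindex A (onW_bij _ A_bij)).
apply: eq_big => [y | y /eqP xy_z]; first by rewrite -A_add (can2_eq AK BK).
rewrite !ffunE !AK -xy_z !mulrA sign_ftwist_coboundary.
by ring.
Qed.

Lemma relabel_homogeneous c x :
  relabel (Oscale c (ubasis R x)) = Oscale (c * (-1) ^+ s x) (ubasis R (A x)).
Proof.
apply/ffunP => z; rewrite !ffunE (can2_eq BK AK).
by have [->|_] := eqVneq z (A x); rewrite ?AK /= ?mulr0 // !mulr1 mulrC.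
Qed.

Lemma graded_iso_relabel : graded_iso relabel.
Proof.
split.
- exact: Bijective relabelK unrelabelK.
- by move=> a b; apply/ffunP => z; rewrite !ffunE mulrDr.
- by move=> c a; apply/ffunP => z; rewrite !ffunE mulrCA.
- exact: relabel_mul.
- by move=> _ [c [x ->]]; exists (c * (-1) ^+ s x), (A x); apply: relabel_homogeneous.
Qed.

End SignedRelabelling.

(* Finfun application does not reduce under vm_compute (the enumeration of
   the domain is locked), so the exhaustive checks below evaluate [twist] at
   list-indexing functions instead of [ftwist] at finfuns. *)
Definition twist (p n : nat) (x y : 'I_n -> bool) : nat :=
  (\sum_(i < n) \sum_(j < n) \sum_(k < n | i < j < k)
     (x i * x j * y k + x i * y j * x k + y i * x j * x k)
   + \sum_(i < n) \sum_(j < n | i <= j) x i * y j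
   + \sum_(i < n | i < p) x i * y i)%N.

Lemma ftwistE p q (x y : Z2n (p + q)) : ftwist x y = twist p x y.
Proof. by []. Qed.

Lemma eq_twist p n (x x' y y' : 'I_n -> bool) :
  x =1 x' -> y =1 y' -> twist p x y = twist p x' y'.
Proof.
move=> eq_x eq_y; rewrite /twist.
by congr (_ + _ + _)%N; do ?(apply: eq_bigr => ? _); rewrite ?eq_x ?eq_y.
Qed.

(* Unlike [inord k], which goes through the opaque [idP], these are values. *)
Definition o0 : 'I_4 := @Ordinal 4 0 isT.
Definition o1 : 'I_4 := @Ordinal 4 1 isT.
Definition o2 : 'I_4 := @Ordinal 4 2 isT.
Definition o3 : 'I_4 := @Ordinal 4 3 isT.

Lemma index_enum_ord4 : index_enum 'I_4 = [:: o0; o1; o2; o3].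
Proof. by apply: (inj_map val_inj); rewrite /index_enum -enumT val_enum_ord. Qed.

Definition vec4 (a0 a1 a2 a3 : bool) : Z2n 4 :=
  [ffun i : 'I_4 => nth false [:: a0; a1; a2; a3] i].

Lemma vec4_eta (x : Z2n 4) : x = vec4 (x o0) (x o1) (x o2) (x o3).
Proof.
apply/ffunP => i; rewrite ffunE.
by case: i => -[|[|[|[|k]]]] lt_k4 //=; congr (x _); apply: val_inj.
Qed.

Lemma Z2n4_ind (P : Z2n 4 -> Prop) :
  (forall a0 a1 a2 a3, P (vec4 a0 a1 a2 a3)) -> forall x, P x.
Proof. by move=> Pvec4 x; rewrite [x]vec4_eta. Qed.

Lemma vec4_add a0 a1 a2 a3 b0 b1 b2 b3 :
  z2add (vec4 a0 a1 a2 a3) (vec4 b0 b1 b2 b3)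
  = vec4 (a0 (+) b0) (a1 (+) b1) (a2 (+) b2) (a3 (+) b3).
Proof. by apply/ffunP => i; rewrite !ffunE; case: i => -[|[|[|[|k]]]]. Qed.

Definition A40 (x : Z2n 4) := vec4 (x o3) (x o0 (+) x o1 (+) x o2) (x o2) (x o1).
Definition B40 (y : Z2n 4) := vec4 (y o1 (+) y o2 (+) y o3) (y o3) (y o2) (y o0).
Definition s40 (x : Z2n 4) := x o1 && x o2 (+) x o0 && x o3.

Lemma A40K : cancel A40 B40.
Proof.
elim/Z2n4_ind => a0 a1 a2 a3; rewrite /A40 /B40 !ffunE /=.
by case: a0; case: a1; case: a2; case: a3.
Qed.

Lemma B40K : cancel B40 A40.
Proof.
elim/Z2n4_ind => a0 a1 a2 a3; rewrite /A40 /B40 !ffunE /=.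
by case: a0; case: a1; case: a2; case: a3.
Qed.

Lemma A40_add : {morph A40 : x y / z2add x y}.
Proof.
elim/Z2n4_ind => a0 a1 a2 a3; elim/Z2n4_ind => b0 b1 b2 b3.
rewrite /A40 vec4_add !ffunE /= vec4_add.
by case: a0 a1 a2 b0 b1 b2 => [] [] [] [] [] [].
Qed.

Lemma ftwist40_coboundary (x y : Z2n (4 + 0)) :
  s40 (z2add x y) (+) odd (ftwist x y)
  = s40 x (+) s40 y (+) odd (@ftwist 2 2 (A40 x) (A40 y)).
Proof.
elim/Z2n4_ind: x => a0 a1 a2 a3; elim/Z2n4_ind: y => b0 b1 b2 b3.
rewrite !ftwistE /s40 /A40 !ffunE !(eq_twist _ (ffunE _) (ffunE _)).
rewrite /twist index_enum_ord4 unlock.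
by move: a0 a1 a2 a3 b0 b1 b2 b3; do 8 case; vm_compute.
Qed.

Definition A31 (x : Z2n 4) := vec4 (x o0 (+) x o1 (+) x o2) (x o3) (x o2) (x o1).
Definition B31 (y : Z2n 4) := vec4 (y o0 (+) y o2 (+) y o3) (y o3) (y o2) (y o1).
Definition s31 (x : Z2n 4) := x o1 && x o2 (+) x o1 && x o3 (+) x o2 && x o3.

Lemma A31K : cancel A31 B31.
Proof.
elim/Z2n4_ind => a0 a1 a2 a3; rewrite /A31 /B31 !ffunE /=.
by case: a0; case: a1; case: a2; case: a3.
Qed.

Lemma B31K : cancel B31 A31.
Proof.
elim/Z2n4_ind => a0 a1 a2 a3; rewrite /A31 /B31 !ffunE /=.
by case: a0; case: a1; case: a2; case: a3.
Qed.

Lemma A31_add : {morph A31 : x y / z2add x y}.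
Proof.
elim/Z2n4_ind => a0 a1 a2 a3; elim/Z2n4_ind => b0 b1 b2 b3.
rewrite /A31 vec4_add !ffunE /= vec4_add.
by case: a0 a1 a2 b0 b1 b2 => [] [] [] [] [] [].
Qed.

Lemma ftwist31_coboundary (x y : Z2n (3 + 1)) :
  s31 (z2add x y) (+) odd (ftwist x y)
  = s31 x (+) s31 y (+) odd (@ftwist 1 3 (A31 x) (A31 y)).
Proof.
elim/Z2n4_ind: x => a0 a1 a2 a3; elim/Z2n4_ind: y => b0 b1 b2 b3.
rewrite !ftwistE /s31 /A31 !ffunE !(eq_twist _ (ffunE _) (ffunE _)).
rewrite /twist index_enum_ord4 unlock.
by move: a0 a1 a2 a3 b0 b1 b2 b3; do 8 case; vm_compute.
Qed.

Theorem mainTheorem5 (R : realType) :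
  graded_isomorphic R 4 0 2 2 /\ graded_isomorphic R 3 1 1 3.
Proof.
split.
- exists (@relabel R 4 0 2 2 B40 s40).
  exact: (@graded_iso_relabel R 4 0 2 2 _ _ _ A40K B40K A40_add
            ftwist40_coboundary).
- exists (@relabel R 3 1 1 3 B31 s31).
  exact: (@graded_iso_relabel R 3 1 1 3 _ _ _ A31K B31K A31_add
            ftwist31_coboundary).
Qed.
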